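(* Let $R$ be an associative $\mathbb C$-algebra, let $r_1,r_2,\dots\in R$ and $r'_1,r'_2,\dots\in R$ be two sequences, and let $M_j,N_j$ (entries $\alpha_{j;a,b},\beta_{j;a,b}$) and $M'_j,N'_j$ (entries $\alpha'_{j;a,b},\beta'_{j;a,b}$) be the matrices determined by the recursion below from $(r_j)$ and $(r'_j)$ respectively. (1) If $\lambda\in\mathbb C$ and $r'_j=\lambda^jr_j$ for all $j$, then $\alpha'_{j;a,b}=\lambda^{a-b+1}\alpha_{j;a,b}$ and $\beta'_{j;a,b}=\lambda^{a-b+1}\beta_{j;a,b}$ for all $j\ge a\ge b\ge1$. (2) If $r\mapsto r^*$ is an anti-automorphism of the $\mathbb C$-algebra $R$ and $r'_j=r_j^*$ for all $j$, then $\alpha'_{j;a,b}=(\beta_{j;j-b+1,j-a+1})^*$ and $\beta'_{j;a,b}=(\alpha_{j;j-b+1,j-a+1})^*$ for all $j\ge a\ge b\ge1$.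
   Context: Notation: $E^{[m]}$ is the $m\times m$ matrix over $R$ with $1_R$ on the superdiagonal and $0$ elsewhere; $F^{[m]}$ has entry $i(m-i)\cdot1_R$ in position $(i+1,i)$ for $1\le i\le m-1$ and $0$ elsewhere. Recursion: given $r_1,r_2,\dots\in R$, there are unique matrices $M_j$ ($j\times(j+1)$) and $N_j$ ($(j+1)\times j$) over $R$, $j\ge0$, such that: (A) $M_j$ has $(a,a+1)$ entry $1_R$, $(a,b)$ entry $\alpha_{j;a,b}$ for $b\le a$, and $0$ for $b>a+1$; $N_j$ has $(a,a)$ entry $1_R$ for $a\le j$, $(a+1,b)$ entry $\beta_{j;a,b}$ for $1\le b\le a\le j$, and $0$ for $b>a$ (so $M_0$, $N_0$ are the empty $0\times1$, $1\times0$ matrices); (B) for all $j\ge1$, $M_jN_j=N_{j-1}M_{j-1}+X_j$, where $X_j$ is the $j\times j$ matrix whose only nonzero entry is $r_j$ in the lower-left corner; (C) for all $j\ge1$, $N_jM_j-E^{[j+1]}$ commutes with $F^{[j+1]}$. *)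

From HB Require Import structures.
From mathcomp Require Import all_boot all_order all_algebra.
From mathcomp Require Import complex.
From mathcomp Require Import Rstruct.
Set Implicit Arguments. Unset Strict Implicit. Unset Printing Implicit Defensive.
Import Order.TTheory GRing.Theory Num.Theory.
Local Open Scope ring_scope.

Definition CC : fieldType := (Rdefinitions.R)[i].

Section Defs.
Variables (A : algType CC).

(* entry (i,k) of B with nat indices (0-based); 0 if out of range *)
Definition mxnat (m n : nat) (B : 'M[A]_(m, n)) (i k : nat) : A :=
  match (insub i : option 'I_m), (insub k : option 'I_n) with
  | Some i', Some k' => B i' k'
  | _, _ => 0
  end.

Definition Emx (m : nat) : 'M[A]_m :=
  \matrix_(i, k) (if (k : nat) == i.+1 then 1 else 0).

(* F^[m]: entry i(m-i) at 1-based position (i+1, i), 1 <= i <= m-1 *)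
Definition Fmx (m : nat) : 'M[A]_m :=
  \matrix_(i, k) (if (i : nat) == k.+1 then ((k.+1) * (m - k.+1))%:R else 0).

(* X_j (here of size n.+1 = j): c in the lower-left corner, 0 elsewhere *)
Definition Xmx (n : nat) (c : A) : 'M[A]_n.+1 :=
  \matrix_(i, k) (if (i == ord_max) && (k == ord0) then c else 0).

(* M, N satisfy conditions (A), (B), (C) of the recursion for the sequence r
   (r j is r_j; r 0 is unused).  Indices are 0-based in Rocq. *)
Definition recursion_MN (r : nat -> A)
    (M : forall j, 'M[A]_(j, j.+1)) (N : forall j, 'M[A]_(j.+1, j)) : Prop :=
  [/\
      (forall j (i : 'I_j) (k : 'I_j.+1),
          ((k : nat) == i.+1 -> M j i k = 1) /\ ((i.+1 < k)%N -> M j i k = 0)),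
      (forall j (i : 'I_j.+1) (k : 'I_j),
          ((k : nat) == i -> N j i k = 1) /\ ((i < k)%N -> N j i k = 0)),
      (* (B) M_j N_j = N_{j-1} M_{j-1} + X_j, j >= 1 *)
      (forall j, M j.+1 *m N j.+1 = N j *m M j + Xmx j (r j.+1))
    &
      (forall j, (0 < j)%N ->
          (N j *m M j - Emx j.+1) *m Fmx j.+1
          = Fmx j.+1 *m (N j *m M j - Emx j.+1))].

(* alpha_{j;a,b} = (a,b) entry of M_j, 1-based *)
Definition alpha (M : forall j, 'M[A]_(j, j.+1)) (j a b : nat) : A :=
  mxnat (M j) a.-1 b.-1.

(* beta_{j;a,b} = (a+1,b) entry of N_j, 1-based *)
Definition beta (N : forall j, 'M[A]_(j.+1, j)) (j a b : nat) : A :=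
  mxnat (N j) a b.-1.

Definition anti_automorphism (s : A -> A) : Prop :=
  [/\ forall x y, s (x + y) = s x + s y,
      forall (c : CC) x, s (c *: x) = c *: s x,
      forall x y, s (x * y) = s y * s x,
      s 1 = 1
    & bijective s].

End Defs.

From HB Require Import structures.
From mathcomp Require Import all_boot all_order all_algebra.
From mathcomp Require Import complex.
From mathcomp Require Import Rstruct.
From mathcomp Require Import zify.
Import Order.TTheory GRing.Theory Num.Theory.
Set Implicit Arguments. Unset Strict Implicit. Unset Printing Implicit Defensive.
Local Open Scope ring_scope.

(* Both parts reduce to the uniqueness of the solution of the recursion.
   Rescaling the entries of M_j and N_j by powers of lambda according to their
   distance from the diagonal, resp. applying * entrywise and transposing about
   the anti-diagonal, turns a solution for (r_j) into a solution for
   (lambda^j r_j), resp. for the sequence of the r_j^*, which must then be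
   (M'_j, N'_j).
   Uniqueness goes by induction on j and, for fixed j, on the distance d from
   the diagonal.  Condition (B) makes the unknown entries of M_j and N_j on the
   d-th diagonal cancel in pairs, so the d-th diagonal of the difference of the
   two N_j M_j telescopes to a sequence with vanishing sum; commuting with
   F^[j+1] makes consecutive terms of that sequence proportional with positive
   ratios, so it vanishes identically. *)

Lemma sum_ord_supp1 (V : nmodType) n c (F : nat -> V) :
  (forall b, b != c -> F b = 0) -> \sum_(b < n) F b = if (c < n)%N then F c else 0.
Proof.
move=> F0; rewrite -(big_ord1_eq +%R F c n) [RHS]big_mkcond /=.
by apply: eq_bigr => b _; case: eqP => // /eqP; exact: F0.
Qed.

Lemma weighted_chain_eq0 (F : numFieldType) (V : lmodType F)
    (c c' : nat -> F) (x : nat -> V) n :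
  (forall k, (k < n)%N -> 0 < c k /\ 0 < c' k) ->
  (forall k, (k < n)%N -> c k *: x k.+1 = c' k *: x k) ->
  \sum_(k < n.+1) x k = 0 -> forall k, (k <= n)%N -> x k = 0.
Proof.
move=> c_pos x_rec sum_x0.
pose g k := \prod_(i < k) (c' i / c i).
have g_pos k : (k <= n)%N -> 0 < g k.
  move=> kn; apply: prodr_gt0 => i _.
  by have [ci c'i] := c_pos i (leq_trans (ltn_ord i) kn); exact: divr_gt0.
have x_g k : (k <= n)%N -> x k = g k *: x 0.
  elim: k => [_|k IH kn]; first by rewrite /g big_ord0 scale1r.
  have [ck _] := c_pos k kn.
  rewrite /g big_ord_recr /= mulrC -scalerA -/(g k) -IH ?(ltnW kn) //.
  by rewrite mulrC -scalerA -x_rec // scalerA mulVf ?scale1r // gt_eqF.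
have sum_g_pos : 0 < \sum_(k < n.+1) g k.
  rewrite big_ord_recl; apply: ltr_pwDl; first exact: g_pos.
  by apply: sumr_ge0 => i _; apply/ltW/g_pos; rewrite /= ltn_ord.
have x0 : x 0 = 0.
  have : (\sum_(k < n.+1) g k) *: x 0 = 0.
    by rewrite scaler_suml -[RHS]sum_x0; apply: eq_bigr => k _; rewrite -x_g // -ltnS.
  by move/eqP; rewrite scaler_eq0 gt_eqF //= => /eqP.
by move=> k kn; rewrite x_g // x0 scaler0.
Qed.

Section NatIndexedEntries.
Variable A : algType CC.

Lemma mxnatE m n (X : 'M[A]_(m, n)) (i : 'I_m) (k : 'I_n) : mxnat X i k = X i k.
Proof. by rewrite /mxnat !valK. Qed.

Lemma mxnat_out m n (X : 'M[A]_(m, n)) i k :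
  (m <= i)%N || (n <= k)%N -> mxnat X i k = 0.
Proof.
rewrite /mxnat; case: insubP => [i' Hi _|//]; case: insubP => [k' Hk _|//].
by rewrite leqNgt Hi leqNgt Hk.
Qed.

Lemma mxnat_in m n (X : 'M[A]_(m, n)) i k (Hi : (i < m)%N) (Hk : (k < n)%N) :
  mxnat X i k = X (Ordinal Hi) (Ordinal Hk).
Proof. by rewrite -mxnatE. Qed.

Lemma mxnat_mul m n p (X : 'M[A]_(m, n)) (Y : 'M[A]_(n, p)) i k :
  mxnat (X *m Y) i k = \sum_(b < n) mxnat X i b * mxnat Y b k.
Proof.
have [Hi|Hi] := ltnP i m; last first.
  by rewrite mxnat_out ?Hi // big1 // => b _; rewrite mxnat_out ?Hi ?mul0r.
have [Hk|Hk] := ltnP k p; last first.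
  rewrite mxnat_out ?Hk ?orbT // big1 // => b _.
  by rewrite (mxnat_out Y) ?Hk ?orbT ?mulr0.
by rewrite mxnat_in mxE; apply: eq_bigr => b _; rewrite -!mxnatE.
Qed.

Lemma mxnat0 m n i k : mxnat (0 : 'M[A]_(m, n)) i k = 0.
Proof.
have [Hi|Hi] := ltnP i m; last by rewrite mxnat_out ?Hi.
have [Hk|Hk] := ltnP k n; last by rewrite mxnat_out ?Hk ?orbT.
by rewrite mxnat_in mxE.
Qed.

Lemma mxnatD m n (X Y : 'M[A]_(m, n)) i k :
  mxnat (X + Y) i k = mxnat X i k + mxnat Y i k.
Proof.
have [Hi|Hi] := ltnP i m; last by rewrite !mxnat_out ?Hi ?addr0.
have [Hk|Hk] := ltnP k n; last by rewrite !mxnat_out ?Hk ?orbT ?addr0.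
by rewrite !mxnat_in !mxE.
Qed.

Lemma mxnatB m n (X Y : 'M[A]_(m, n)) i k :
  mxnat (X - Y) i k = mxnat X i k - mxnat Y i k.
Proof.
have [Hi|Hi] := ltnP i m; last by rewrite !mxnat_out ?Hi ?subr0.
have [Hk|Hk] := ltnP k n; last by rewrite !mxnat_out ?Hk ?orbT ?subr0.
by rewrite !mxnat_in !mxE.
Qed.

Definition lowerband m n (X : 'M[A]_(m, n)) (s w : nat) :=
  forall i k, (i + s < k + w)%N -> mxnat X i k = 0.

Lemma lowerbandD m n (X Y : 'M[A]_(m, n)) s w :
  lowerband X s w -> lowerband Y s w -> lowerband (X + Y) s w.
Proof. by move=> X0 Y0 i k ik; rewrite mxnatD X0 ?Y0 ?addr0. Qed.

Lemma lowerband_mul m n p (X : 'M[A]_(m, n)) (Y : 'M[A]_(n, p)) s t w v :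
  lowerband X s w -> lowerband Y t v -> lowerband (X *m Y) (s + t) (w + v).
Proof.
move=> X0 Y0 i k ik; rewrite mxnat_mul big1 // => b _.
have [ib|bi] := ltnP (i + s) (b + w); first by rewrite X0 ?mul0r.
by rewrite Y0 ?mulr0 //; lia.
Qed.

Lemma lowerband_mulE m n p (X : 'M[A]_(m, n)) (Y : 'M[A]_(n, p)) s t w v i b k :
  lowerband X s w -> lowerband Y t v ->
  (i + s = b + w)%N -> (b + t = k + v)%N ->
  mxnat (X *m Y) i k = mxnat X i b * mxnat Y b k.
Proof.
move=> X0 Y0 ib bk; rewrite mxnat_mul.
rewrite (@sum_ord_supp1 _ _ b (fun b' => mxnat X i b' * mxnat Y b' k)) => [|b' b'b].
  by case: ltnP => // nb; rewrite mxnat_out ?nb ?orbT ?mul0r.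
have [b'_lt|b'_gt] := ltnP b' b; first by rewrite Y0 ?mulr0 //; lia.
by rewrite X0 ?mul0r //; move: b'b; rewrite neq_ltn; lia.
Qed.

Definition Mshape m (X : 'M[A]_(m, m.+1)) :=
  forall (i : 'I_m) (k : 'I_m.+1),
    ((k : nat) == i.+1 -> X i k = 1) /\ ((i.+1 < k)%N -> X i k = 0).

Definition Nshape m (X : 'M[A]_(m.+1, m)) :=
  forall (i : 'I_m.+1) (k : 'I_m),
    ((k : nat) == i -> X i k = 1) /\ ((i < k)%N -> X i k = 0).

Section Shapes.
Variable m : nat.

Lemma Mshape_lowerband (X : 'M[A]_(m, m.+1)) : Mshape X -> lowerband X 1 0.
Proof.
move=> sh i k; rewrite addn1 addn0 => ik.
have [Hi|Hi] := ltnP i m; last by rewrite mxnat_out ?Hi.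
have [Hk|Hk] := ltnP k m.+1; last by rewrite mxnat_out ?Hk ?orbT.
by rewrite mxnat_in; apply: (proj2 (sh _ _)).
Qed.

Lemma Mshape_superdiag (X : 'M[A]_(m, m.+1)) i :
  Mshape X -> (i < m)%N -> mxnat X i i.+1 = 1.
Proof.
by move=> sh Hi; rewrite (@mxnat_in _ _ X i i.+1 Hi Hi); apply: (proj1 (sh _ _)).
Qed.

Lemma Nshape_lowerband (X : 'M[A]_(m.+1, m)) : Nshape X -> lowerband X 0 0.
Proof.
move=> sh i k; rewrite !addn0 => ik.
have [Hk|Hk] := ltnP k m; last by rewrite mxnat_out ?Hk ?orbT.
have Hi : (i < m.+1)%N by lia.
by rewrite (mxnat_in _ Hi Hk); apply: (proj2 (sh _ _)).
Qed.

Lemma Nshape_diag (X : 'M[A]_(m.+1, m)) i :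
  Nshape X -> (i < m)%N -> mxnat X i i = 1.
Proof.
by move=> sh Hi; rewrite (@mxnat_in _ _ X i i (ltnW Hi) Hi); apply: (proj1 (sh _ _)).
Qed.

Lemma Mshape_subr_lowerband (X X' : 'M[A]_(m, m.+1)) :
  Mshape X -> Mshape X' -> lowerband (X - X') 1 1.
Proof.
move=> sh sh' i k; rewrite !addn1 ltnS leq_eqVlt mxnatB => /orP[/eqP <-|ik].
  have [Hi|Hi] := ltnP i m; last by rewrite !mxnat_out ?Hi ?subr0.
  by rewrite !Mshape_superdiag ?subrr.
by rewrite (Mshape_lowerband sh) ?(Mshape_lowerband sh') ?subr0 //; lia.
Qed.

Lemma Nshape_subr_lowerband (X X' : 'M[A]_(m.+1, m)) :
  Nshape X -> Nshape X' -> lowerband (X - X') 0 1.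
Proof.
move=> sh sh' i k; rewrite addn0 addn1 ltnS leq_eqVlt mxnatB => /orP[/eqP ->|ik].
  have [Hk|Hk] := ltnP k m; last by rewrite !mxnat_out ?Hk ?orbT ?subr0.
  by rewrite !Nshape_diag ?subrr.
by rewrite (Nshape_lowerband sh) ?(Nshape_lowerband sh') ?subr0 //; lia.
Qed.

End Shapes.

Lemma Fmx_lowerband n : lowerband (Fmx A n) 0 1.
Proof.
move=> i k; rewrite addn0 addn1 => ik.
have [Hi|Hi] := ltnP i n; last by rewrite mxnat_out ?Hi.
have [Hk|Hk] := ltnP k n; last by rewrite mxnat_out ?Hk ?orbT.
by rewrite mxnat_in mxE; case: eqP => //= ik'; move: ik; rewrite ik' ltnn.
Qed.

Lemma Fmx_subdiag n k : (k.+1 < n)%N ->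
  mxnat (Fmx A n) k.+1 k = (k.+1 * (n - k.+1))%:R.
Proof. by move=> Hk; rewrite (mxnat_in _ Hk (ltnW Hk)) mxE eqxx. Qed.

Lemma mulmx_subr_split m n p (X X' : 'M[A]_(m, n)) (Y Y' : 'M[A]_(n, p)) :
  X *m Y - X' *m Y' = (X - X') *m Y + X' *m (Y - Y').
Proof. by rewrite mulmxBl mulmxBr addrA subrK. Qed.

Section Uniqueness.
Variables (m : nat) (B B' : 'M[A]_(m, m.+1)) (C C' : 'M[A]_(m.+1, m)).
Hypotheses (shB : Mshape B) (shB' : Mshape B') (shC : Nshape C) (shC' : Nshape C').
Hypothesis BC_eq : B *m C = B' *m C'.
Hypothesis CB_comm :
  (C *m B - C' *m B') *m Fmx A m.+1 = Fmx A m.+1 *m (C *m B - C' *m B').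

Section DiagonalStep.
Variable w : nat.
Hypotheses (dB_band : lowerband (B - B') 1 w.+1) (dC_band : lowerband (C - C') 0 w.+1).

Let u k := mxnat (B - B') (k + w) k.
Let v k := mxnat (C - C') (k + w).+1 k.
Let x k := mxnat (C *m B - C' *m B') (k + w) k.

Lemma diag_BC k : (k + w < m)%N -> u k + v k = 0.
Proof.
move=> kw; rewrite -(mxnat0 m m (k + w) k) -(subrr (B' *m C')) -{1}BC_eq.
rewrite mulmx_subr_split mxnatD.
rewrite (lowerband_mulE (b := k) dB_band (Nshape_lowerband shC)) ?addn0 //; last by lia.
rewrite (lowerband_mulE (b := (k + w).+1) (Mshape_lowerband shB') dC_band); try lia.
by rewrite Nshape_diag ?Mshape_superdiag ?mulr1 ?mul1r //; lia.
Qed.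

Lemma diag_CB k : (k + w <= m)%N -> x k = u k + (if k is k'.+1 then v k' else 0).
Proof.
move=> kw; rewrite /x mulmx_subr_split mxnatD addrC.
rewrite (lowerband_mulE (b := k + w) (Nshape_lowerband shC') dB_band); try lia.
have -> : mxnat C' (k + w) (k + w) * u k = u k.
  have [kw'|mk] := ltnP (k + w) m; first by rewrite Nshape_diag ?mul1r.
  by rewrite /u (mxnat_out (B - B')) ?mk ?mulr0.
congr (_ + _); case: k kw => [|k] kw.
  by rewrite mxnat_mul big1 // => b _; rewrite dC_band ?mul0r //; lia.
rewrite (lowerband_mulE (b := k) dC_band (Mshape_lowerband shB)); try lia.
by rewrite Mshape_superdiag ?mulr1 /v ?addSn //; lia.
Qed.

Lemma diag_rec k : (k + w < m)%N ->
  (k.+1 * (m - k))%:R *: x k.+1 = ((k + w).+1 * (m - (k + w)))%:R *: x k.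
Proof.
move=> kw; set D := C *m B - C' *m B'.
have D_band : lowerband D 1 w.+1.
  rewrite /D mulmx_subr_split; apply: lowerbandD.
    by have := lowerband_mul dC_band (Mshape_lowerband shB); rewrite addn0.
  exact: lowerband_mul (Nshape_lowerband shC') dB_band.
have := congr1 (fun X => mxnat X (k + w).+1 k) CB_comm => /=.
rewrite (lowerband_mulE (b := k.+1) D_band (Fmx_lowerband m.+1)); try lia.
rewrite (lowerband_mulE (b := k + w) (Fmx_lowerband m.+1) D_band); try lia.
rewrite !Fmx_subdiag; try lia.
rewrite !subSS => E.
by rewrite !scaler_nat /x addSn -mulr_natr E mulr_natl.
Qed.

Lemma diag_step k : (k + w < m)%N -> u k = 0 /\ v k = 0.
Proof.
have [wm|mw] := ltnP w m; last by lia.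
pose n := (m - w)%N.
have v_u j : (j + w < m)%N -> v j = - u j.
  by move=> jw; apply/eqP; rewrite -addr_eq0 addrC diag_BC.
have sum_x : \sum_(j < n.+1) x j = 0.
  rewrite big_ord_recl diag_CB ?addr0 /=; last by lia.
  rewrite (eq_bigr (fun j : 'I_n => u j.+1 - u j)) => [|j _]; last first.
    by rewrite /bump /= add1n diag_CB /= ?v_u //; have := ltn_ord j; lia.
  rewrite -(big_mkord (fun _ => true) (fun j => u j.+1 - u j)) telescope_sumr //.
  by rewrite addrC subrK /u mxnat_out //; apply/orP; left; lia.
have x0 j : (j <= n)%N -> x j = 0.
  apply: (weighted_chain_eq0 (c := fun i => (i.+1 * (m - i))%:R : CC)
             (c' := fun i => ((i + w).+1 * (m - (i + w)))%:R) _ _ sum_x).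
    by move=> i lt_in; rewrite !ltr0n !muln_gt0; split; lia.
  by move=> i lt_in; apply: diag_rec; lia.
elim: k => [|k IH] kw.
  have u0 : u 0 = 0 by rewrite -[u 0]addr0 -(diag_CB (ltnW kw)) x0 //; lia.
  by rewrite v_u // u0 oppr0.
have [_ vk] : u k = 0 /\ v k = 0 by apply: IH; lia.
have uk : u k.+1 = 0 by rewrite -[u k.+1]addr0 -vk -diag_CB ?x0 //; lia.
by rewrite v_u // uk oppr0.
Qed.

Lemma band_step : lowerband (B - B') 1 w.+2 /\ lowerband (C - C') 0 w.+2.
Proof.
split=> i k ik.
  have [//|] := ltnP (i + 1) (k + w.+1); first exact: dB_band.
  move=> ki; have -> : i = (k + w)%N by lia.
  have [kw|mk] := ltnP (k + w) m; first by case: (diag_step kw).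
  by rewrite mxnat_out ?mk.
have [//|] := ltnP (i + 0) (k + w.+1); first exact: dC_band.
move=> ki; have -> : i = (k + w).+1 by lia.
have [kw|mk] := ltnP (k + w) m; first by case: (diag_step kw).
by rewrite mxnat_out //; apply/orP; left; lia.
Qed.

End DiagonalStep.

Lemma shaped_factors_unique : B = B' /\ C = C'.
Proof.
have band w : lowerband (B - B') 1 w.+1 /\ lowerband (C - C') 0 w.+1.
  elim: w => [|w [dB dC]]; last exact: band_step.
  by split; [apply: Mshape_subr_lowerband | apply: Nshape_subr_lowerband].
have [dB dC] := band m.
split; apply/matrixP => i k; apply/eqP; rewrite -subr_eq0 -!mxnatE -mxnatB.
  by rewrite dB //; have := ltn_ord i; lia.
by rewrite dC //; have := ltn_ord i; lia.
Qed.

End Uniqueness.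

Lemma recursion_MN_unique (r : nat -> A) M N M' N' :
  recursion_MN r M N -> recursion_MN r M' N' -> forall j, M j = M' j /\ N j = N' j.
Proof.
case=> shM shN BC CF [shM' shN' BC' CF'].
elim=> [|j [IHM IHN]].
  by split; apply/matrixP; [move=> [i Hi] | move=> i [k Hk]].
apply: shaped_factors_unique (shM j.+1) (shM' j.+1) (shN j.+1) (shN' j.+1) _ _.
  by rewrite BC BC' IHM IHN.
set P := N j.+1 *m M j.+1; set P' := N' j.+1 *m M' j.+1; set E := Emx A j.+2.
have -> : P - P' = (P - E) - (P' - E) by rewrite opprB addrA subrK.
by rewrite mulmxBl mulmxBr CF ?CF'.
Qed.

Section GradedScaling.
Variable l : CC.

Definition gradescale p q (e : nat -> nat -> nat) (X : 'M[A]_(p, q)) :=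
  \matrix_(i, k) (l ^+ e i k *: X i k).

Lemma mxnat_gradescale p q (e : nat -> nat -> nat) (X : 'M[A]_(p, q)) i k :
  mxnat (gradescale e X) i k = l ^+ e i k *: mxnat X i k.
Proof.
have [Hi|Hi] := ltnP i p; last by rewrite !mxnat_out ?Hi ?scaler0.
have [Hk|Hk] := ltnP k q; last by rewrite !mxnat_out ?Hk ?orbT ?scaler0.
by rewrite !mxnat_in mxE.
Qed.

Lemma gradescaleB p q (e : nat -> nat -> nat) (X Y : 'M[A]_(p, q)) :
  gradescale e (X - Y) = gradescale e X - gradescale e Y.
Proof. by apply/matrixP => i k; rewrite !mxE scalerBr. Qed.

Lemma gradescale_id p q (e : nat -> nat -> nat) (X : 'M[A]_(p, q)) :
  (forall (i : 'I_p) (k : 'I_q), X i k = 0 \/ e i k = 0%N) -> gradescale e X = X.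
Proof.
by move=> X0; apply/matrixP => i k; rewrite mxE; case: (X0 i k) => ->;
  rewrite ?scaler0 ?expr0 ?scale1r.
Qed.

Lemma gradescale_mul p q t (X : 'M[A]_(p, q)) (Y : 'M[A]_(q, t))
    (eX eY e : nat -> nat -> nat) :
  (forall (i : 'I_p) (b : 'I_q) (k : 'I_t),
      X i b * Y b k = 0 \/ (eX i b + eY b k = e i k)%N) ->
  gradescale eX X *m gradescale eY Y = gradescale e (X *m Y).
Proof.
move=> XY; apply/matrixP => i k; rewrite !mxE scaler_sumr; apply: eq_bigr => b _.
rewrite !mxE -scalerAl -scalerAr scalerA -exprD.
by case: (XY i b k) => ->; rewrite ?scaler0.
Qed.

(* The exponents of lambda in part (1): alpha_{j;a,b} is the entry (a-1, b-1)
   of M_j and beta_{j;a,b} the entry (a, b-1) of N_j, both scaled by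
   lambda^(a-b+1). *)
Let degM (i k : nat) := (i.+1 - k)%N.
Let degN (i k : nat) := (i - k)%N.

Lemma recursion_MN_scale (r r' : nat -> A) M N :
  recursion_MN r M N -> (forall j, (0 < j)%N -> r' j = l ^+ j *: r j) ->
  recursion_MN r' (fun j => gradescale degM (M j)) (fun j => gradescale degN (N j)).
Proof.
case=> shM shN BC CF r'E.
have NM j :
    gradescale degN (N j) *m gradescale degM (M j) = gradescale degM (N j *m M j).
  apply: gradescale_mul => i b k.
  have [ib|bi] := ltnP i b; first by left; rewrite (proj2 (shN _ _ _) ib) mul0r.
  have [bk|kb] := ltnP b.+1 k; first by left; rewrite (proj2 (shM _ _ _) bk) mulr0.
  by right; rewrite /degM /degN; lia.
have MN j :
    gradescale degM (M j) *m gradescale degN (N j) = gradescale degM (M j *m N j).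
  apply: gradescale_mul => i b k.
  have [ib|bi] := ltnP i.+1 b; first by left; rewrite (proj2 (shM _ _ _) ib) mul0r.
  have [bk|kb] := ltnP b k; first by left; rewrite (proj2 (shN _ _ _) bk) mulr0.
  by right; rewrite /degM /degN; lia.
have Fmx_id n : gradescale (fun _ _ => 0%N) (Fmx A n) = Fmx A n.
  by apply: gradescale_id => *; right.
have Emx_id n : gradescale degM (Emx A n) = Emx A n.
  apply: gradescale_id => i k; rewrite mxE.
  by case: eqP => [->|]; [right; rewrite /degM subnn | left].
split.
- move=> j i k; rewrite !mxE /degM; split => [ki|ik].
    by rewrite (proj1 (shM _ _ _) ki) (eqP ki) subnn scale1r.
  by rewrite (proj2 (shM _ _ _) ik) scaler0.
- move=> j i k; rewrite !mxE /degN; split => [ki|ik].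
    by rewrite (proj1 (shN _ _ _) ki) (eqP ki) subnn scale1r.
  by rewrite (proj2 (shN _ _ _) ik) scaler0.
- move=> j; rewrite MN NM BC; apply/matrixP => i k; rewrite !mxE scalerDr.
  congr (_ + _); case: andP => [[/eqP -> /eqP ->]|_]; last by rewrite scaler0.
  by rewrite /degM /= subn0 r'E.
- move=> j j_gt0; rewrite NM -(Emx_id j.+1) -gradescaleB -(Fmx_id j.+1).
  rewrite !(@gradescale_mul _ _ _ _ _ _ _ degN) ?CF // => i b k.
    rewrite [Fmx _ _ _ _]mxE; case: eqP => [->|_]; last by left; rewrite mul0r.
    by right; rewrite /degM /degN; lia.
  rewrite [Fmx _ _ _ _]mxE; case: eqP => [->|_]; last by left; rewrite mulr0.
  by right; rewrite /degM /degN; lia.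
Qed.

End GradedScaling.

Section AntiTranspose.
Variable s : A -> A.
Hypothesis s_anti : anti_automorphism s.

Lemma anti_autB x y : s (x - y) = s x - s y.
Proof.
case: s_anti => sD sZ _ _ _.
by rewrite sD -scaleN1r sZ scaleN1r.
Qed.

Lemma anti_aut0 : s 0 = 0.
Proof. by rewrite -{1}(subrr (0 : A)) anti_autB subrr. Qed.

Lemma anti_aut_sum n (F : 'I_n -> A) : s (\sum_(i < n) F i) = \sum_(i < n) s (F i).
Proof. by case: s_anti => sD _ _ _ _; apply: (big_morph s sD anti_aut0). Qed.

Lemma anti_aut_nat n : s n%:R = n%:R.
Proof. by case: s_anti => _ sZ _ s1 _; rewrite -scaler_nat sZ s1. Qed.

Definition anti_trmx p q (X : 'M[A]_(p, q)) : 'M[A]_(q, p) :=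
  \matrix_(i, k) s (X (rev_ord k) (rev_ord i)).

Lemma mxnat_anti_trmx p q (X : 'M[A]_(p, q)) i k : (i < q)%N -> (k < p)%N ->
  mxnat (anti_trmx X) i k = s (mxnat X (p - k.+1) (q - i.+1)).
Proof.
move=> Hi Hk; rewrite (mxnat_in _ Hi Hk) mxE.
by rewrite (mxnat_in _ (rev_ord_proof (Ordinal Hk)) (rev_ord_proof (Ordinal Hi))).
Qed.

Lemma anti_trmx_mul p q t (X : 'M[A]_(p, q)) (Y : 'M[A]_(q, t)) :
  anti_trmx (X *m Y) = anti_trmx Y *m anti_trmx X.
Proof.
case: s_anti => _ _ sM _ _.
apply/matrixP => i k; rewrite !mxE anti_aut_sum (reindex_inj rev_ord_inj).
by apply: eq_bigr => b _; rewrite !mxE sM.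
Qed.

Lemma anti_trmxB p q (X Y : 'M[A]_(p, q)) :
  anti_trmx (X - Y) = anti_trmx X - anti_trmx Y.
Proof. by apply/matrixP => i k; rewrite !mxE anti_autB. Qed.

Lemma anti_trmxD p q (X Y : 'M[A]_(p, q)) :
  anti_trmx (X + Y) = anti_trmx X + anti_trmx Y.
Proof. by case: s_anti => sD _ _ _ _; apply/matrixP => i k; rewrite !mxE sD. Qed.

Lemma anti_trmx_Emx n : anti_trmx (Emx A n) = Emx A n.
Proof.
case: s_anti => _ _ _ s1 _.
apply/matrixP => i k; rewrite !mxE /=.
have -> : ((n - i.+1)%N == (n - k.+1).+1) = ((k : nat) == i.+1).
  by have := ltn_ord i; have := ltn_ord k; lia.
by case: ifP; rewrite ?s1 ?anti_aut0.
Qed.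

Lemma anti_trmx_Fmx n : anti_trmx (Fmx A n) = Fmx A n.
Proof.
apply/matrixP => i k; rewrite !mxE /=.
have Hi := ltn_ord i; have Hk := ltn_ord k.
have -> : ((n - k.+1)%N == (n - i.+1).+1) = ((i : nat) == k.+1) by lia.
case: eqP => [ik|_]; last exact: anti_aut0.
by rewrite anti_aut_nat mulnC; congr (_ * _)%:R; lia.
Qed.

Lemma anti_trmx_Xmx n c : anti_trmx (Xmx n c) = Xmx n (s c).
Proof.
apply/matrixP => i k; rewrite !mxE.
have -> : (rev_ord k == ord_max) = (k == ord0).
  by rewrite -!val_eqE /=; have := ltn_ord k; lia.
have -> : (rev_ord i == ord0) = (i == ord_max).
  by rewrite -!val_eqE /=; have := ltn_ord i; lia.
by rewrite andbC; case: ifP => //; rewrite anti_aut0.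
Qed.

Lemma recursion_MN_anti (r r' : nat -> A) M N :
  recursion_MN r M N -> (forall j, (0 < j)%N -> r' j = s (r j)) ->
  recursion_MN r' (fun j => anti_trmx (N j)) (fun j => anti_trmx (M j)).
Proof.
case=> shM shN BC CF r'E; have [_ _ _ s1 _] := s_anti.
split.
- move=> j i k; rewrite !mxE; have := ltn_ord i; have := ltn_ord k.
  split=> [ki|ik]; first by rewrite (proj1 (shN _ _ _)) ?s1 //=; lia.
  by rewrite (proj2 (shN _ _ _)) ?anti_aut0 //=; lia.
- move=> j i k; rewrite !mxE; have := ltn_ord i; have := ltn_ord k.
  split=> [ki|ik]; first by rewrite (proj1 (shM _ _ _)) ?s1 //=; lia.
  by rewrite (proj2 (shM _ _ _)) ?anti_aut0 //=; lia.
- by move=> j; rewrite -anti_trmx_mul BC anti_trmxD anti_trmx_mul anti_trmx_Xmx r'E.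
- move=> j j_gt0; rewrite -anti_trmx_mul -(anti_trmx_Emx j.+1) -anti_trmxB.
  by rewrite -(anti_trmx_Fmx j.+1) -!anti_trmx_mul CF.
Qed.

End AntiTranspose.

End NatIndexedEntries.

Theorem lemma4p7 (A : algType CC) (r r' : nat -> A)
    (M : forall j, 'M[A]_(j, j.+1)) (N : forall j, 'M[A]_(j.+1, j))
    (M' : forall j, 'M[A]_(j, j.+1)) (N' : forall j, 'M[A]_(j.+1, j)) :
  recursion_MN r M N -> recursion_MN r' M' N' ->
  (forall lambda : CC,
     (forall j, (0 < j)%N -> r' j = lambda ^+ j *: r j) ->
     forall j a b, (1 <= b)%N -> (b <= a)%N -> (a <= j)%N ->
       alpha M' j a b = lambda ^+ (a - b + 1) *: alpha M j a b /\
       beta N' j a b = lambda ^+ (a - b + 1) *: beta N j a b) /\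
  (forall s : A -> A, anti_automorphism s ->
     (forall j, (0 < j)%N -> r' j = s (r j)) ->
     forall j a b, (1 <= b)%N -> (b <= a)%N -> (a <= j)%N ->
       alpha M' j a b = s (beta N j (j - b + 1) (j - a + 1)) /\
       beta N' j a b = s (alpha M j (j - b + 1) (j - a + 1))).
Proof.
move=> HM HM'; split=> [l r'E | s s_anti r'E] j a b b_gt0 ba aj; rewrite /alpha /beta.
  have [-> ->] := recursion_MN_unique HM' (recursion_MN_scale HM r'E) j.
  by rewrite !mxnat_gradescale /=; split; congr (_ ^+ _ *: _); lia.
have [-> ->] := recursion_MN_unique HM' (recursion_MN_anti s_anti HM r'E) j.
rewrite !mxnat_anti_trmx; try lia.
by split; congr (s (mxnat _ _ _)); lia.
Qed.
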